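(* If $G$ is a connected, claw-free, cubic graph, then \[ \sigma_{(2,3)}(G) \le \sigma_{(2,2)}(G) \le \sigma_{(2,3)}(G)+1. \] In addition, if $G\neq K_4$, then $u(G) \le \sigma_{(2,2)}(G) \le u(G)+1$, where $u(G)$ is the number of units of $G$.
   Context: A graph is claw-free if it has no induced subgraph isomorphic to $K_{1,3}$; it is cubic if every vertex has degree $3$. A diamond is an induced subgraph isomorphic to $K_4$ minus one edge. For a connected, claw-free, cubic graph $G\neq K_4$, the vertex set $V(G)$ can be uniquely partitioned into sets each of which induces a triangle or a diamond in $G$; the parts of this partition are called units, and $u(G)$ is the number of units. $(p,q)$-spreading: let $p\in\mathbb{N}$ and $q\in\mathbb{N}\cup\{\infty\}$. Start with a set $S\subseteq V(G)$ of blue vertices, all other vertices white. The color change rule: if a white vertex $w$ has at least $p$ blue neighbors, and at least one of the blue neighbors of $w$ has at most $q$ white neighbors, then $w$ is recolored blue. $S$ is a $(p,q)$-spreading set if repeatedly applying this rule eventually colors all vertices blue. $\sigma_{(p,q)}(G)$ is the minimum cardinality of a $(p,q)$-spreading set of $G$. *)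

From mathcomp Require Import all_boot all_order.
Set Implicit Arguments. Unset Strict Implicit. Unset Printing Implicit Defensive.

Section Graphs.
Variables (T : finType) (e : rel T).

Definition simple_graph : Prop := symmetric e /\ irreflexive e.

Definition nbhd (v : T) : {set T} := [set w | e v w].

Definition cubic : Prop := forall v, #|nbhd v| = 3.

Definition connected_graph : Prop := forall x y : T, connect e x y.

Definition claw_free : Prop :=
  forall v a b c : T, e v a -> e v b -> e v c ->
    a != b -> b != c -> a != c -> [|| e a b, e b c | e a c].

Definition is_K4 : Prop :=
  #|T| = 4 /\ forall x y : T, x != y -> e x y.

Definition induces_triangle (A : {set T}) : bool :=
  (#|A| == 3) && [forall x in A, forall y in A, (x != y) ==> e x y].

Definition induces_diamond (A : {set T}) : bool :=
  (#|A| == 4) &&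
  [exists x in A, exists y in A,
     [&& x != y, ~~ e x y &
      [forall a in A, forall b in A,
         ((a != b) && ([set a; b] != [set x; y])) ==> e a b]]].

Definition unit_partition (P : {set {set T}}) : bool :=
  partition P [set: T] &&
  [forall A in P, induces_triangle A || induces_diamond A].

(* u(G): number of units of the (unique) unit partition. *)
Definition num_units : nat :=
  match [pick P | unit_partition P] with
  | Some P => #|P|
  | None => 0
  end.

(* (p,q)-spreading, q finite (only q = 2, 3 are needed). *)
Definition spread_step (p q : nat) (B B' : {set T}) : bool :=
  [exists w, [&& w \notin B,
                 p <= #|nbhd w :&: B|,
                 [exists b in nbhd w :&: B, #|nbhd b :\: B| <= q] &
                 B' == w |: B]].

Definition spreading_set (p q : nat) (S : {set T}) : bool :=
  connect (spread_step p q) S [set: T].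

(* sigma_{(p,q)}(G): minimum size of a (p,q)-spreading set
   ([set: T] is always one, so the arg min is well defined). *)
Definition sigma (p q : nat) : nat :=
  #|[arg min_(S < [set: T] | spreading_set p q S) #|S|]|.

End Graphs.

From mathcomp Require Import all_boot all_order zify.
Set Implicit Arguments. Unset Strict Implicit. Unset Printing Implicit Defensive.

(* Every vertex of a unit has two neighbours inside it, hence at most one
   outside.  So for p >= 2 a unit without blue vertices can never receive one,
   and every (p,q)-spreading set meets every unit: u(G) <= sigma.  Conversely,
   two adjacent blue vertices of a unit (2,2)-force the whole unit, and a blue
   vertex w with a neighbour u in a white unit U (w has at most two white
   neighbours, since its own unit is blue) turns u blue as soon as one more
   neighbour of u in U is blue.  Walking through the connected graph unit by
   unit, starting with two vertices and adding one per further unit, gives a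
   (2,2)-spreading set of size u(G) + 1.  As (2,2)-spreading sets are
   (2,3)-spreading, u <= sigma_(2,3) <= sigma_(2,2) <= u + 1.  The unit
   partition exists since claw-freeness puts every vertex on a triangle and,
   outside K_4, two triangles through a vertex span a diamond; K_4 itself is
   (2,2)-spread from any two vertices. *)

Lemma connect_invariant (T : finType) (r : rel T) (I : pred T) x y :
  (forall a b, I a -> r a b -> I b) -> I x -> connect r x y -> I y.
Proof.
move=> rI + /connectP [s rs ->]; elim: s x rs => //= z s IHs x /andP [rxz rs] Ix.
exact: IHs rs (rI _ _ Ix rxz).
Qed.

Lemma connect_cross (T : finType) (r : rel T) (I : pred T) x y :
  I x -> ~~ I y -> connect r x y -> exists a b, [/\ I a, ~~ I b & r a b].
Proof.
move=> Ix nIy rxy.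
have [/existsP [a /existsP [b /and3P [Ia nIb rab]]] | /existsPn noexit] :=
  boolP [exists a, exists b, [&& I a, ~~ I b & r a b]]; first by exists a, b.
case/negP: nIy; apply: connect_invariant Ix rxy => a b Ia rab.
by move/existsPn: (noexit a) => /(_ b); rewrite Ia rab andbT negbK.
Qed.

Section Spreading.
Variables (T : finType) (e : rel T).

Lemma spreading_set_leq_q p q q' (S : {set T}) :
  q <= q' -> spreading_set e p q S -> spreading_set e p q' S.
Proof.
move=> le_qq'; apply: connect_sub => B B' /existsP [w /and4P [wB pB]].
case/exists_inP => b bB le_bq eqB'; apply: connect1; apply/existsP; exists w.
by rewrite wB pB eqB' andbT; apply/exists_inP; exists b => //; apply: leq_trans le_qq'.
Qed.

Lemma sigma_min p q (S : {set T}) : spreading_set e p q S -> sigma e p q <= #|S|.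
Proof.
by rewrite /sigma => spS; case: arg_minnP => [|S0 _ /(_ S spS)]; rewrite /spreading_set.
Qed.

Lemma sigmaP p q : exists2 S, spreading_set e p q S & #|S| = sigma e p q.
Proof.
by rewrite /sigma; case: arg_minnP => [|S0 spS0 _]; [rewrite /spreading_set | exists S0].
Qed.

Lemma sigma_leq_q p q q' : q <= q' -> sigma e p q' <= sigma e p q.
Proof.
by move=> le_qq'; have [S spS <-] := sigmaP p q; apply/sigma_min/(spreading_set_leq_q le_qq').
Qed.

Lemma sigma_gt0 p q : 0 < p -> 0 < #|T| -> 0 < sigma e p q.
Proof.
move=> p_gt0 /card_gt0P [v _]; have [S spS <-] := sigmaP p q.
rewrite card_gt0; apply: contraTneq isT => S0; move: spS; rewrite S0.
have stuck B B' : B == set0 -> spread_step e p q B B' -> B' == set0.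
  by move=> /eqP -> /existsP [w /and4P [_]]; rewrite setI0 cards0 leqNgt p_gt0.
by move=> /(connect_invariant stuck (eqxx _)) /eqP /setP /(_ v); rewrite !inE.
Qed.

Variables p q : nat.

(* Quantifying over every blue superset C of S makes forcing monotone in S,
   so that forcings can be chained. *)
Definition forces (S X : {set T}) := forall C : {set T}, S \subset C ->
  exists2 C', connect (spread_step e p q) C C' & C :|: X \subset C'.

Lemma forces_mono (S S' X : {set T}) : S \subset S' -> forces S X -> forces S' X.
Proof. by move=> sSS' fSX C sS'C; apply: fSX; apply: subset_trans sS'C. Qed.

Lemma forces_trans (S X Y : {set T}) :
  forces S X -> forces (S :|: X) Y -> forces S (X :|: Y).
Proof.
move=> fSX fSXY C sSC; have [C' cCC' sCXC'] := fSX C sSC.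
have sSXC' : S :|: X \subset C' by apply: subset_trans sCXC'; apply: setSU.
have [C'' cC'C'' sC'YC''] := fSXY C' sSXC'.
exists C''; first exact: connect_trans cCC' cC'C''.
by rewrite setUA; apply: subset_trans sC'YC''; apply: setSU.
Qed.

Lemma forces_close (S X Y : {set T}) : forces S X -> Y \subset S :|: X -> forces S Y.
Proof.
move=> fSX sYSX C sSC; have [C' cCC' sCXC'] := fSX C sSC; exists C' => //.
apply: subset_trans sCXC'; rewrite subUset subsetUl /=.
by apply: subset_trans sYSX _; apply: setSU.
Qed.

Lemma forces_spreading (S : {set T}) : forces S [set: T] -> spreading_set e p q S.
Proof.
case/(_ S (subxx S)) => C cSC; rewrite setUT subTset => /eqP CT.
by rewrite /spreading_set -CT.
Qed.

End Spreading.

Lemma cards3 (T : finType) (a b c : T) :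
  a != b -> b != c -> a != c -> #|[set a; b; c]| = 3.
Proof. by move=> ab bc ac; rewrite -setUA cardsU1 cards2 !inE negb_or ab ac bc. Qed.

Lemma cards4 (T : finType) (a b c d : T) :
  a != b -> a != c -> a != d -> b != c -> b != d -> c != d -> #|[set a; b; c; d]| = 4.
Proof.
by move=> ab ac ad bc bd cd; rewrite -!setUA !cardsU1 cards1 !inE !negb_or ab ac ad bc bd cd.
Qed.

Lemma mem_cover_subset (T : finType) (P Q : {set {set T}}) U x :
  trivIset P -> Q \subset P -> U \in P -> x \in U -> (x \in cover Q) = (U \in Q).
Proof.
move=> tP sQP PU xU; apply/bigcupP/idP => [[V QV xV] | QU]; last by exists U.
by rewrite -(def_pblock tP PU xU) (def_pblock tP (subsetP sQP V QV) xV).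
Qed.

Lemma num_unitsP (T : finType) (e : rel T) : (exists P, unit_partition e P) ->
  exists2 P, unit_partition e P & num_units e = #|P|.
Proof.
case=> P0 uP0; rewrite /num_units; case: pickP => [P uP | noP]; first by exists P.
by move: (noP P0); rewrite uP0.
Qed.

Lemma is_K4P (T : finType) (e : rel T) :
  reflect (is_K4 e) ((#|T| == 4) && [forall x, forall y, (x != y) ==> e x y]).
Proof.
apply: (iffP andP) => [[/eqP cT /forallP adj] | [cT adj]].
  by split => // x y; move/forallP: (adj x) => /(_ y) /implyP.
by rewrite cT; split => //; apply/forallP => x; apply/forallP => y; apply/implyP/adj.
Qed.

Section CubicGraph.
Variables (T : finType) (e : rel T).
Hypotheses (sym : symmetric e) (irr : irreflexive e) (cub : cubic e).

Lemma adj_neq x y : e x y -> x != y.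
Proof. by apply: contraTneq => ->; rewrite irr. Qed.

Lemma nbhd3E v a b c : e v a -> e v b -> e v c -> a != b -> b != c -> a != c ->
  nbhd e v = [set a; b; c].
Proof.
move=> va vb vc ab bc ac; apply/esym/eqP; rewrite eqEcard cub cards3 // leqnn andbT.
by apply/subsetP => x; rewrite !inE -orbA => /or3P [] /eqP ->.
Qed.

Lemma third_nbr v y z : exists2 n, e v n & n \notin [set y; z].
Proof.
have /subsetPn [n] : ~~ (nbhd e v \subset [set y; z]).
  by apply/negP => /subset_leq_card; rewrite cub cards2; case: (y != z).
by rewrite inE; exists n.
Qed.

Lemma induces_triangle_at A w : induces_triangle e A -> w \in A ->
  exists y z, A = [set w; y; z] /\ [&& e w y, e y z & e w z].
Proof.
case/andP => /eqP cA /forall_inP adjA wA.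
have adj x y : x \in A -> y \in A -> x != y -> e x y.
  by move=> xA yA; move/forall_inP: (adjA x xA) => /(_ y yA) /implyP.
have /cards2P [y [z [yz defAw]]] : #|A :\ w| == 2.
  by move: (cardsD1 w A); rewrite cA wA => /succn_inj <-.
have : y \in A :\ w by rewrite defAw !inE eqxx.
have : z \in A :\ w by rewrite defAw !inE eqxx orbT.
rewrite !inE => /andP [zw zA] /andP [yw yA].
exists y, z; split; first by rewrite -(setD1K wA) defAw setUA.
by rewrite !adj // eq_sym.
Qed.

Lemma induces_triangle3 x y z :
  e x y -> e y z -> e x z -> induces_triangle e [set x; y; z].
Proof.
move=> xy yz xz; rewrite /induces_triangle cards3 ?adj_neq //=.
apply/forall_inP => a; rewrite !inE -orbA => /or3P [] /eqP ->;
apply/forall_inP => b; rewrite !inE -orbA => /or3P [] /eqP ->;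
by rewrite ?eqxx //=; apply/implyP => _; rewrite // sym.
Qed.

Definition diamond_edges a b c d := [&& e a b, e a d, e c b, e c d & e b d].

Lemma induces_diamond_shape D : induces_diamond e D -> exists a b c d,
  [/\ D = [set a; b; c; d], diamond_edges a b c d, a != c & ~~ e a c].
Proof.
case/andP => /eqP cD /exists_inP [a aD /exists_inP [c cD' /and3P [ac nac /forall_inP adjD]]].
have adj x y : x \in D -> y \in D -> x != y -> y \notin [set a; c] -> e x y.
  move=> xD yD xy yac; move/forall_inP: (adjD x xD) => /(_ y yD) /implyP; apply.
  by rewrite xy; apply: contra yac => /eqP <-; rewrite !inE eqxx orbT.
have sacD : [set a; c] \subset D by apply/subsetP => x; rewrite !inE => /orP [] /eqP ->.
have /cards2P [b [d [bd defD']]] : #|D :\: [set a; c]| == 2.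
  by rewrite cardsD (setIidPr sacD) cD cards2 ac.
have : b \in D :\: [set a; c] by rewrite defD' !inE eqxx.
have : d \in D :\: [set a; c] by rewrite defD' !inE eqxx orbT.
rewrite !inE !negb_or => /andP [/andP [da dc] dD] /andP [/andP [ba bc] bD].
exists a, b, c, d; split => //.
  rewrite -(setID D [set a; c]) (setIidPr sacD) defD'; apply/setP => x; rewrite !inE.
  by case: (x == a); case: (x == b); case: (x == c); rewrite /= ?orbT ?orbF.
by rewrite /diamond_edges !adj // ?inE ?negb_or ?ba ?bc ?da ?dc // eq_sym.
Qed.

Lemma induces_diamond4 a b c d :
  diamond_edges a b c d -> a != c -> ~~ e a c -> induces_diamond e [set a; b; c; d].
Proof.
case/and5P => ab ad cb cd bd ac nac.
rewrite /induces_diamond; have -> : #|[set a; b; c; d]| = 4.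
  by rewrite cards4 ?(adj_neq ab, adj_neq ad, adj_neq bd, adj_neq cd) // eq_sym adj_neq.
apply/exists_inP; exists a; first by rewrite !inE eqxx.
apply/exists_inP; exists c; first by rewrite !inE eqxx orbT.
rewrite ac nac /=.
apply/forall_inP => x; rewrite !inE -!orbA => /or4P [] /eqP ->;
apply/forall_inP => y; rewrite !inE -!orbA => /or4P [] /eqP ->;
apply/implyP => /andP [xy pxy];
by [| rewrite sym | rewrite eqxx in xy | rewrite eqxx in pxy | rewrite setUC eqxx in pxy].
Qed.

Definition is_unit A := induces_triangle e A || induces_diamond e A.

Lemma unit_nbrs_in_gt1 U w : is_unit U -> w \in U -> 1 < #|nbhd e w :&: U|.
Proof.
case/orP => [tU wU | ].
  have [y [z [-> /and3P [wy yz wz]]]] := induces_triangle_at tU wU.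
  by apply/card_gt1P; exists y, z; rewrite !inE wy wz !eqxx !orbT adj_neq.
case/induces_diamond_shape => a [b [c [d [-> /and5P [ab ad cb cd bd] ac _]]]].
rewrite !inE -!orbA => /or4P [] /eqP ->; apply/card_gt1P.
- by exists b, d; rewrite !inE ab ad !eqxx !orbT adj_neq.
- by exists a, c; rewrite !inE !(sym b) ab cb !eqxx !orbT.
- by exists b, d; rewrite !inE cb cd !eqxx !orbT adj_neq.
- by exists a, c; rewrite !inE !(sym d) ad cd !eqxx !orbT.
Qed.

Lemma unit_nbr U w : is_unit U -> w \in U -> exists2 t, e w t & t \in U.
Proof.
move=> uU wU; have /card_gt0P [t] := ltnW (unit_nbrs_in_gt1 uU wU).
by rewrite !inE => /andP [wt tU]; exists t.
Qed.

Lemma unit_nbrs_out_le1 U w : is_unit U -> w \in U -> #|nbhd e w :\: U| <= 1.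
Proof. by move=> uU wU; have := unit_nbrs_in_gt1 uU wU; rewrite cardsD cub; lia. Qed.

Lemma diamond_nbhd_sub D x y : induces_diamond e D -> x \in D -> y \in D -> e x y ->
  (nbhd e x \subset D) || (nbhd e y \subset D).
Proof.
case/induces_diamond_shape => a [b [c [d [-> /and5P [ab ad cb cd bd] ac nac]]]].
have [ba bc da db dc] : [/\ e b a, e b c, e d a, e d b & e d c] by rewrite !(sym b) !(sym d).
have sub_abcd v : v \in [set a; c; d] :|: [set a; b; c] -> v \in [set a; b; c; d].
  by rewrite !inE; do 4?case: (v == _); rewrite ?orbT.
have nb_b : nbhd e b \subset [set a; b; c; d].
  rewrite (nbhd3E ba bc bd) ?ac ?adj_neq //.
  by apply/subsetP => v vN; apply: sub_abcd; rewrite inE vN.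
have nb_d : nbhd e d \subset [set a; b; c; d].
  rewrite (nbhd3E da db dc) ?ac ?adj_neq //.
  by apply/subsetP => v vN; apply: sub_abcd; rewrite inE vN orbT.
rewrite !inE -!orbA => /or4P [] /eqP -> /or4P [] /eqP ->;
by rewrite ?nb_b ?nb_d ?orbT ?irr ?(negbTE nac) // sym (negbTE nac).
Qed.

Lemma diamond_triangle_closed D x y z : induces_diamond e D -> x \in D ->
  e x y -> e x z -> e y z -> y \in D.
Proof.
move=> dD xD xy xz yz; apply: contraT => yD.
have uD : is_unit D by rewrite /is_unit dD orbT.
have zD : z \in D.
  apply: contraT => zD; suff : 1 < #|nbhd e x :\: D| by rewrite ltnNge unit_nbrs_out_le1.
  by apply/card_gt1P; exists y, z; rewrite !inE xy xz yD zD adj_neq.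
have zy : e z y by rewrite sym.
case/orP: (diamond_nbhd_sub dD xD zD xz) => /subsetP/(_ y); rewrite inE.
  by move=> /(_ xy); rewrite (negbTE yD).
by move=> /(_ zy); rewrite (negbTE yD).
Qed.

Lemma triangle_sub_diamond A D x : induces_triangle e A -> induces_diamond e D ->
  x \in A -> x \in D -> A \subset D.
Proof.
move=> tA dD xA xD; have [y [z [-> /and3P [xy yz xz]]]] := induces_triangle_at tA xA.
have yD := diamond_triangle_closed dD xD xy xz yz.
have zD := diamond_triangle_closed dD xD xz xy (etrans (sym z y) yz).
by apply/subsetP => v; rewrite !inE -orbA => /or3P [] /eqP ->.
Qed.

Lemma diamond_eq D1 D2 w : induces_diamond e D1 -> induces_diamond e D2 ->
  w \in D1 -> w \in D2 -> D1 = D2.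
Proof.
move=> dD1 dD2 wD1; have cD1 : #|D1| = 4 by case/andP: dD1 => /eqP.
have cD2 : #|D2| = 4 by case/andP: dD2 => /eqP.
case/induces_diamond_shape: dD2 cD2 => a [b [c [d [-> /and5P [ab ad cb cd bd] _ _]]]] cD2 wD2.
have tA1 := induces_triangle3 ab bd ad.
have tA2 := induces_triangle3 cb bd cd.
have bA1 : b \in [set a; b; d] by rewrite !inE eqxx orbT.
have bA2 : b \in [set c; b; d] by rewrite !inE eqxx orbT.
have bD1 : b \in D1.
  have : (w \in [set a; b; d]) || (w \in [set c; b; d]).
    by move: wD2; rewrite !inE; do 4?case: (w == _); rewrite ?orbT.
  case/orP => wA; [move: bA1 | move: bA2]; apply/subsetP;
  exact: triangle_sub_diamond wA wD1.
have /subsetP sA1 := triangle_sub_diamond tA1 dD1 bA1 bD1.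
have /subsetP sA2 := triangle_sub_diamond tA2 dD1 bA2 bD1.
apply/eqP; rewrite eq_sym eqEcard cD1 cD2 leqnn andbT.
apply/subsetP => v; rewrite !inE -!orbA => /or4P [] /eqP ->;
first [by apply: sA1; rewrite !inE eqxx ?orbT | by apply: sA2; rewrite !inE eqxx ?orbT].
Qed.

Lemma unit_neq0 U : is_unit U -> U != set0.
Proof. by rewrite -card_gt0; case/orP => /andP [/eqP -> _]. Qed.

Lemma spreading_set_meets_unit p q U S : 1 < p -> is_unit U ->
  spreading_set e p q S -> exists2 x, x \in S & x \in U.
Proof.
move=> p_gt1 uU spS; case: (boolP [exists x in S, x \in U]) => [/exists_inP // | noSU].
have SU : S \subset ~: U.
  by apply/subsetP => x xS; rewrite inE; apply: contra noSU => xU; apply/exists_inP; exists x.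
have stay (B B' : {set T}) : B \subset ~: U -> spread_step e p q B B' -> B' \subset ~: U.
  move=> BU /existsP [w /and4P [_ pB _ /eqP ->]]; rewrite subUset sub1set inE BU andbT.
  apply: contraTN pB => wU; rewrite -ltnNge; apply: leq_trans p_gt1; rewrite ltnS.
  apply: leq_trans (unit_nbrs_out_le1 uU wU); apply: subset_leq_card.
  apply/subsetP => v; rewrite !inE => /andP [-> vB]; rewrite andbT.
  by move: (subsetP BU v vB); rewrite inE.
have [v vU] := set0Pn _ (unit_neq0 uU).
by move: (connect_invariant stay SU spS) => /subsetP/(_ v); rewrite !inE vU => /(_ isT).
Qed.

Lemma units_le_spreading_set p q P S : 1 < p -> unit_partition e P ->
  spreading_set e p q S -> #|P| <= #|S|.
Proof.
move=> p_gt1 /andP [/and3P [_ tP _] /forall_inP uP] spS.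
apply: leq_trans (leq_imset_card (pblock P) S); apply: subset_leq_card.
apply/subsetP => U PU; have [x xS xU] := spreading_set_meets_unit p_gt1 (uP U PU) spS.
by apply/imsetP; exists x => //; rewrite (def_pblock tP PU xU).
Qed.

Lemma units_le_sigma p q P : 1 < p -> unit_partition e P -> #|P| <= sigma e p q.
Proof.
move=> p_gt1 uP; have [S spS <-] := sigmaP e p q.
exact: units_le_spreading_set p_gt1 uP spS.
Qed.

Section Forcing.
Variable q : nat.
Hypothesis q_ge2 : 1 < q.
Local Notation forces := (forces e 2 q).

Lemma forces_nbr (S : {set T}) w x y h : x != y -> e w x -> e w y ->
  x \in S -> y \in S -> e x h -> h \in S -> forces S [set w].
Proof.
move=> xy wx wy xS yS xh hS C /subsetP sSC.
have [wC | wNC] := boolP (w \in C).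
  by exists C => //; rewrite subUset subxx sub1set.
exists (w |: C); last by rewrite setUC.
apply: connect1; apply/existsP; exists w; rewrite wNC eqxx andbT /=.
apply/andP; split.
  by apply/card_gt1P; exists x, y; rewrite !inE wx wy !sSC.
apply/exists_inP; exists x; first by rewrite !inE wx sSC.
suff : 0 < #|nbhd e x :&: C| by rewrite cardsD cub; lia.
by apply/card_gt0P; exists h; rewrite !inE xh sSC.
Qed.

Lemma forces_common_nbr (S : {set T}) w x y :
  e x y -> e w x -> e w y -> x \in S -> y \in S -> forces S [set w].
Proof. by move=> xy wx wy xS yS; exact: (forces_nbr (adj_neq xy) wx wy xS yS xy yS). Qed.

Lemma forces_triangle A (S : {set T}) x y : induces_triangle e A ->
  x \in A -> y \in A -> x != y -> x \in S -> y \in S -> forces S A.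
Proof.
move=> tA xA yA xy xS yS; have [u [v [defA /and3P [xu uv xv]]]] := induces_triangle_at tA xA.
have [ux vx vu] : [/\ e u x, e v x & e v u] by rewrite !(sym u) !(sym v).
move: yA; rewrite defA !inE eq_sym (negbTE xy) /= => /orP [] /eqP yE; subst y.
- apply: forces_close (forces_common_nbr xu vx vu xS yS) _.
  by apply/subsetP => z; rewrite !inE -orbA => /or3P [] /eqP ->; rewrite ?xS ?yS ?eqxx ?orbT.
- apply: forces_close (forces_common_nbr xv ux uv xS yS) _.
  by apply/subsetP => z; rewrite !inE -orbA => /or3P [] /eqP ->; rewrite ?xS ?yS ?eqxx ?orbT.
Qed.

Lemma forces_diamond D (S : {set T}) x y : induces_diamond e D ->
  x \in D -> y \in D -> e x y -> x \in S -> y \in S -> forces S D.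
Proof.
case/induces_diamond_shape => a [b [c [d [-> /and5P [ab ad cb cd bd] _ nac]]]] xD yD xy xS yS.
have tA1 := induces_triangle3 ab bd ad.
have tA2 := induces_triangle3 cb bd cd.
have extend (A A' S' : {set T}) : induces_triangle e A' -> b \in A' -> d \in A' ->
    b \in A -> d \in A -> forces S' A -> forces S' (A :|: A').
  move=> tA' bA' dA' bA dA fA; apply: forces_trans fA _.
  by apply: forces_triangle tA' bA' dA' (adj_neq bd) _ _; rewrite inE ?bA ?dA orbT.
have [bA1 dA1 bA2 dA2] : [/\ b \in [set a; b; d], d \in [set a; b; d],
    b \in [set c; b; d] & d \in [set c; b; d]] by rewrite !inE !eqxx !orbT.
have -> : [set a; b; c; d] = [set a; b; d] :|: [set c; b; d].
  by apply/setP => v; rewrite !inE; do 4?case: (v == _); rewrite ?orbT.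
have : (x \in [set a; b; d]) && (y \in [set a; b; d]) ||
       (x \in [set c; b; d]) && (y \in [set c; b; d]).
  move: xD yD xy; rewrite !inE -!orbA => /or4P [] /eqP -> /or4P [] /eqP ->;
  by rewrite ?eqxx ?orbT ?(negbTE nac) //= sym (negbTE nac).
case/orP => /andP [xA yA].
  apply: extend tA2 bA2 dA2 bA1 dA1 _.
  exact: forces_triangle tA1 xA yA (adj_neq xy) xS yS.
rewrite setUC; apply: extend tA1 bA1 dA1 bA2 dA2 _.
exact: forces_triangle tA2 xA yA (adj_neq xy) xS yS.
Qed.

Lemma forces_unit U (S : {set T}) x y : is_unit U ->
  x \in U -> y \in U -> e x y -> x \in S -> y \in S -> forces S U.
Proof.
case/orP => [tU | dU] xU yU xy xS yS; last exact: forces_diamond dU xU yU xy xS yS.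
exact: forces_triangle tU xU yU (adj_neq xy) xS yS.
Qed.

Lemma K4_sigma_le2 : is_K4 e -> sigma e 2 q <= 2.
Proof.
case=> cT adj.
have [v _] : exists v, v \in [set: T] by apply/card_gt0P; rewrite cardsT cT.
have /card_gt2P [a [b [c [[va vb vc] [ab bc ca]]]]] : 2 < #|nbhd e v| by rewrite cub.
rewrite !inE in va vb vc.
have Nv : nbhd e v = [set a; b; c] by rewrite (nbhd3E va vb vc) // eq_sym.
have [bv cv ba ca'] : [/\ e b v, e c v, e b a & e c a].
  by rewrite !(sym _ v) vb vc !adj // eq_sym.
have fb : forces [set v; a] [set b].
  by apply: forces_common_nbr va bv ba _ _; rewrite !inE eqxx ?orbT.
have fc : forces ([set v; a] :|: [set b]) [set c].
  by apply: forces_common_nbr va cv ca' _ _; rewrite !inE eqxx ?orbT.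
have spS : spreading_set e 2 q [set v; a].
  apply/forces_spreading/(forces_close (forces_trans fb fc)).
  apply/subsetP => t _; have [-> | tv] := eqVneq t v; first by rewrite !inE eqxx.
  have : t \in nbhd e v by rewrite inE adj // eq_sym.
  by rewrite Nv !inE -orbA => /or3P [] ->; rewrite ?orbT.
by apply: leq_trans (sigma_min spS) _; rewrite cards2; case: (v != a).
Qed.

Section UpperBound.
Variable P : {set {set T}}.
Hypotheses (con : connected_graph e) (uP : unit_partition e P).

Let cover_P : cover P = [set: T].
Proof. by case/andP: uP => /and3P [/eqP]. Qed.

Let triv_P : trivIset P.
Proof. by case/andP: uP => /and3P []. Qed.

Let unit_P U : U \in P -> is_unit U.
Proof. by case/andP: uP => _ /forall_inP; apply. Qed.

Let block_nonempty U : U \in P -> exists x, x \in U.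
Proof. by move/unit_P/unit_neq0/set0Pn. Qed.

Lemma forces_next_unit (S : {set T}) (Q : {set {set T}}) :
  Q \subset P -> Q != set0 -> Q != P -> forces S (cover Q) ->
  exists U s, U \in P :\: Q /\ forces (s |: S) (cover (U |: Q)).
Proof.
move=> sQP Q0 QP fSQ.
have [x xQ] : exists x, x \in cover Q.
  have [V QV] := set0Pn _ Q0; have [x xV] := block_nonempty (subsetP sQP V QV).
  by exists x; apply/bigcupP; exists V.
have [y yQ] : exists y, y \notin cover Q.
  have /properP [_ [V PV QV]] : Q \proper P by rewrite properEneq QP.
  by have [y yV] := block_nonempty PV; exists y; rewrite (mem_cover_subset triv_P sQP PV yV).
have [w [u [/= wQ uQ wu]]] := connect_cross (I := [in cover Q]) xQ yQ (con x y).
have block_mem v : v \in pblock P v by rewrite mem_pblock cover_P inE.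
have block_P v : pblock P v \in P by apply: pblock_mem; rewrite cover_P inE.
have blockQ v : (v \in cover Q) = (pblock P v \in Q).
  exact: mem_cover_subset triv_P sQP (block_P v) (block_mem v).
set U := pblock P u.
have QU : U \notin Q by rewrite -blockQ.
have wU : w \notin U.
  by apply: contra QU => wU; rewrite -(mem_cover_subset triv_P sQP (block_P u) wU).
have [s us sU] := unit_nbr (unit_P (block_P u)) (block_mem u).
have [h wh hw] := unit_nbr (unit_P (block_P w)) (block_mem w).
have hQ : h \in cover Q.
  by rewrite (mem_cover_subset triv_P sQP (block_P w) hw) -blockQ.
exists U, s; split; first by rewrite inE QU block_P.
rewrite /cover big_setU1 //= -/(cover Q).
have fQ : forces (s |: S) (cover Q) := forces_mono (subsetUr _ _) fSQ.
have fu : forces ((s |: S) :|: cover Q) [set u].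
  apply: (forces_nbr (x := w) (y := s) (h := h)); rewrite ?inE ?wQ ?hQ ?eqxx ?orbT //.
  - by apply: contraNneq wU => ->.
  - by rewrite sym.
have fU : forces ((s |: S) :|: cover Q :|: [set u]) U.
  by apply: forces_unit (unit_P (block_P u)) (block_mem u) sU us _ _; rewrite !inE ?eqxx ?orbT.
apply: forces_close (forces_trans fQ (forces_trans fu fU)) _.
by apply/subsetP => v; rewrite !inE => /orP [] ->; rewrite ?orbT.
Qed.

Lemma forces_partition (S : {set T}) (Q : {set {set T}}) : Q \subset P -> Q != set0 ->
  forces S (cover Q) ->
  exists2 S' : {set T}, #|S'| <= #|S| + #|P :\: Q| & spreading_set e 2 q S'.
Proof.
move cPQ : #|P :\: Q| => n; elim: n S Q cPQ => [|n IHn] S Q cPQ sQP Q0 fSQ.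
  exists S; first by rewrite addn0.
  have QP : Q = P by apply/eqP; rewrite eqEsubset sQP -setD_eq0 -cards_eq0 cPQ.
  by apply/forces_spreading/(forces_close fSQ); rewrite QP cover_P subsetUr.
have QP : Q != P by apply/eqP => QP; move: cPQ; rewrite QP setDv cards0.
have [U [s [PQU fUQ]]] := forces_next_unit sQP Q0 QP fSQ.
have [|||S' cS' spS'] := IHn (s |: S) (U |: Q) _ _ _ fUQ.
- have -> : P :\: (U |: Q) = (P :\: Q) :\ U.
    by apply/setP => V; rewrite !inE negb_or andbA andbAC.
  by move: (cardsD1 U (P :\: Q)); rewrite PQU cPQ => /succn_inj.
- by move: PQU; rewrite subUset sub1set sQP inE andbT => /andP [].
- by rewrite setU_eq0 negb_and -card_gt0 cards1.
exists S' => //; apply: leq_trans cS' _.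
by rewrite cardsU1 -addnA addnS -add1n leq_add2r leq_b1.
Qed.

Lemma sigma_le_units : sigma e 2 q <= #|P|.+1.
Proof.
have [P0 | [U0 PU0]] := set_0Vmem P.
  have T0 : [set: T] = set0 by rewrite -cover_P P0 /cover big_set0.
  have sp0 : spreading_set e 2 q set0 by rewrite /spreading_set T0 connect0.
  by apply: leq_trans (sigma_min sp0) _; rewrite cards0.
have [x xU0] := block_nonempty PU0.
have [y xy yU0] := unit_nbr (unit_P PU0) xU0.
have fU0 : forces [set x; y] (cover [set U0]).
  by rewrite cover1; apply: forces_unit (unit_P PU0) xU0 yU0 xy _ _; rewrite !inE eqxx ?orbT.
have sU0P : [set U0] \subset P by rewrite sub1set.
have U0_neq0 : [set U0] != set0 by rewrite -card_gt0 cards1.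
have [S cS spS] := forces_partition sU0P U0_neq0 fU0.
apply: leq_trans (sigma_min spS) (leq_trans cS _).
by rewrite cards2 (cardsD1 U0 P) PU0 addSn ltnS leq_add2r leq_b1.
Qed.

End UpperBound.

End Forcing.

Section UnitPartition.
Hypotheses (con : connected_graph e) (clawf : claw_free e).

Lemma clique4_K4 (K : {set T}) :
  #|K| = 4 -> {in K &, forall x y, x != y -> e x y} -> is_K4 e.
Proof.
move=> cK adjK.
have nbK x : x \in K -> x |: nbhd e x = K.
  move=> xK; apply/eqP; rewrite eq_sym eqEcard cardsU1 cub inE irr cK leqnn andbT.
  apply/subsetP => y yK; rewrite !inE; case: eqVneq => //= yx.
  by apply: adjK; rewrite // eq_sym.
have closedK a b : a \in K -> e a b -> b \in K.
  by move=> aK ab; rewrite -(nbK a aK) !inE ab orbT.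
have [x xK] : exists x, x \in K by apply/card_gt0P; rewrite cK.
have KT : K = [set: T].
  apply/eqP; rewrite eqEsubset subsetT; apply/subsetP => y _.
  exact: (connect_invariant (I := [in K]) closedK xK (con x y)).
by split => [|x' y']; [rewrite -cardsT -KT | apply: adjK; rewrite KT inE].
Qed.

Lemma vertex_in_triangle v : exists2 A, induces_triangle e A & v \in A.
Proof.
have /card_gt2P [a [b [c [[va vb vc] [ab bc ca]]]]] : 2 < #|nbhd e v| by rewrite cub.
rewrite !inE in va vb vc; rewrite eq_sym in ca.
case/or3P: (clawf va vb vc ab bc ca) => [eab | ebc | eac].
- by exists [set v; a; b]; [exact: induces_triangle3 | rewrite !inE eqxx].
- by exists [set v; b; c]; [exact: induces_triangle3 | rewrite !inE eqxx].
- by exists [set v; a; c]; [exact: induces_triangle3 | rewrite !inE eqxx].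
Qed.

Hypothesis nK4 : ~ is_K4 e.

Lemma triangle_nbr_diamond w y z n : e w y -> e y z -> e w z -> e w n -> e y n ->
  n != z -> exists2 D, induces_diamond e D & [set w; y; z] \subset D.
Proof.
move=> wy yz wz wn yn nz.
have nzn : ~~ e z n.
  apply/negP => zn; apply: nK4; apply: (@clique4_K4 [set w; y; z; n]).
    by rewrite cards4 ?adj_neq.
  move=> a b; rewrite !inE -!orbA => /or4P [] /eqP -> /or4P [] /eqP ->;
  by rewrite ?eqxx // => _; rewrite // sym.
exists [set z; w; n; y].
  apply: induces_diamond4 _ _ nzn; last by rewrite eq_sym.
  by rewrite /diamond_edges !(sym z) !(sym n) wz yz wn yn wy.
by apply/subsetP => v; rewrite !inE -orbA => /or3P [] ->; rewrite ?orbT.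
Qed.

Lemma triangles_in_diamond A1 A2 w : induces_triangle e A1 -> induces_triangle e A2 ->
  A1 != A2 -> w \in A1 -> w \in A2 -> exists2 D, induces_diamond e D & A1 \subset D.
Proof.
move=> tA1 tA2 A12 wA1 wA2.
have [y [z [defA1 /and3P [wy yz wz]]]] := induces_triangle_at tA1 wA1.
have [y' [z' [defA2 /and3P [wy' y'z' wz']]]] := induces_triangle_at tA2 wA2.
have [n wn] := third_nbr w y z; rewrite !inE negb_or => /andP [ny nz].
have ext_y : e y n -> exists2 D, induces_diamond e D & A1 \subset D.
  by move=> yn; rewrite defA1; apply: triangle_nbr_diamond wy yz wz wn yn nz.
have ext_z : e z n -> exists2 D, induces_diamond e D & A1 \subset D.
  move=> zn; rewrite defA1 setUAC; apply: triangle_nbr_diamond wz _ wy wn zn ny.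
  by rewrite sym.
have Nw : nbhd e w = [set y; z; n] by rewrite (nbhd3E wy wz wn) ?(adj_neq yz) // eq_sym.
have : y' \in nbhd e w by rewrite inE.
have : z' \in nbhd e w by rewrite inE.
rewrite Nw !inE -!orbA => /or3P [] /eqP z'E /or3P [] /eqP y'E; subst y' z';
first [ by rewrite irr in y'z' | by rewrite defA1 defA2 eqxx in A12
      | by rewrite defA1 defA2 setUAC eqxx in A12
      | exact: ext_y | exact: ext_z | by apply: ext_y; rewrite sym
      | by apply: ext_z; rewrite sym ].
Qed.

Lemma unit_partition_exists : exists P, unit_partition e P.
Proof.
pose maximal A := induces_diamond e A ||
  induces_triangle e A && [forall D, induces_diamond e D ==> ~~ (A \subset D)].
exists [set A | maximal A]; apply/andP; split; last first.
  by apply/forall_inP => A; rewrite inE => /orP [-> | /andP [-> _]]; rewrite ?orbT.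
apply/and3P; split.
- apply/eqP/setP => v; rewrite inE; apply/bigcupP.
  have [A tA vA] := vertex_in_triangle v.
  have [/existsP [D /andP [dD AD]] | /existsPn noD] :=
    boolP [exists D, induces_diamond e D && (A \subset D)].
    by exists D; [rewrite inE /maximal dD | exact: subsetP AD v vA].
  exists A => //; rewrite inE /maximal tA /=; apply/orP; right.
  by apply/forallP => D; apply/implyP => dD; move: (noD D); rewrite dD.
- apply/trivIsetP => A B; rewrite !inE => mA mB AB; rewrite -setI_eq0.
  apply: contraNT AB => /set0Pn [w]; rewrite inE => /andP [wA wB].
  case/orP: mA => [dA | /andP [tA /forall_inP nA]];
  case/orP: mB => [dB | /andP [tB /forall_inP nB]].
  + by rewrite (diamond_eq dA dB wA wB).
  + by move: (nB A dA); rewrite (triangle_sub_diamond tB dA wB wA).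
  + by move: (nA B dB); rewrite (triangle_sub_diamond tA dB wA wB).
  + apply: contraT => AB; have [D dD AD] := triangles_in_diamond tA tB AB wA wB.
    by move: (nA D dD); rewrite AD.
- by rewrite inE /maximal /induces_diamond /induces_triangle cards0.
Qed.

End UnitPartition.

End CubicGraph.

Unset Implicit Arguments.

Theorem corollary4p8 (T : finType) (e : rel T) :
  simple_graph e -> connected_graph e -> claw_free e -> cubic e ->
  (sigma e 2 3 <= sigma e 2 2 <= (sigma e 2 3).+1) /\
  (~ is_K4 e -> num_units e <= sigma e 2 2 <= (num_units e).+1).
Proof.
move=> [sym irr] con clawf cub.
have le23_22 : sigma e 2 3 <= sigma e 2 2 := sigma_leq_q e 2 (leqnSn 2).
have units_bounds : ~ is_K4 e ->
    num_units e <= sigma e 2 3 /\ sigma e 2 2 <= (num_units e).+1.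
  move=> nK4; have [P uP ->] := num_unitsP (unit_partition_exists sym irr cub con clawf nK4).
  by split; [exact: units_le_sigma | exact: sigma_le_units].
split.
  rewrite le23_22 /=; case: (is_K4P e) => [K4 | nK4].
    apply: leq_trans (K4_sigma_le2 sym irr cub (leqnn 2) K4) _.
    by rewrite ltnS sigma_gt0 //; case: K4 => ->.
  by have [lo hi] := units_bounds nK4; apply: leq_trans hi _.
move=> nK4; have [lo hi] := units_bounds nK4.
by rewrite hi andbT; apply: leq_trans lo le23_22.
Qed.
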